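(* Let $k$ be even, and for $s\in\mathbb{F}_{2^{k-1}}$ let $L_s:\mathbb{F}_{2^{k-1}}\times\mathbb{F}_2\to\mathbb{F}_{2^{k-1}}\times\mathbb{F}_2$ be $L_s(x,\alpha)=(s^2x+s\operatorname{tr}(sx)+\alpha s,\operatorname{tr}(sx))$. Then: (i) $(x,\alpha)\cdot L_s(x,\alpha)=0$ for all $s,x\in\mathbb{F}_{2^{k-1}}$, $\alpha\in\mathbb{F}_2$; (ii) $(x,\alpha)\cdot L_s(y,\beta)=L_s(x,\alpha)\cdot(y,\beta)$ for all $s,x,y$, $\alpha,\beta$; (iii) if $r\neq s$ and $L_r(x,\alpha)=L_s(x,\alpha)$, then $(x,\alpha)=(0,0)$.
   Context: $\operatorname{tr}:\mathbb{F}_{2^{k-1}}\to\mathbb{F}_2$ is the field trace, and the bilinear form on $\mathbb{F}_{2^{k-1}}\times\mathbb{F}_2$ is $(x,\alpha)\cdot(y,\beta)=\operatorname{tr}(xy)+\alpha\beta$. *)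

From HB Require Import structures.
From mathcomp Require Import all_boot all_order all_algebra all_field.
Set Implicit Arguments. Unset Strict Implicit. Unset Printing Implicit Defensive.
Import GRing.Theory.
Local Open Scope ring_scope.

(* F plays the role of F_{2^m} (m = k-1); F_2 is identified with the prime
   subfield {a in F | a^2 = a} = {0,1} of F. *)

Definition ftr (F : finFieldType) (m : nat) (x : F) : F :=
  \sum_(i < m) x ^+ (2 ^ i).

Definition inF2 (F : finFieldType) (a : F) : bool := a ^+ 2 == a.

Definition dotV (F : finFieldType) (m : nat) (u v : F * F) : F :=
  ftr m (u.1 * v.1) + u.2 * v.2.

Definition Lmap (F : finFieldType) (m : nat) (s : F) (u : F * F) : F * F :=
  (s ^+ 2 * u.1 + s * ftr m (s * u.1) + u.2 * s, ftr m (s * u.1)).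

From HB Require Import structures.
From mathcomp Require Import all_boot all_order all_algebra all_field ring.
Import GRing.Theory.
Local Open Scope ring_scope.

(* With these:
   (i)   (x,a).L_s(x,a) = tr((sx)^2) + tr(t (sx)) + a tr(sx) + a t  with
         t = tr(sx); each term is t or a t, so the sum vanishes.
   (ii)  both sides expand to tr(s^2 x y) + tr(sx) tr(sy) + a tr(sy) + b tr(sx).
   (iii) if L_r u = L_s u with u = (x,a) then tr(rx) = tr(sx) = t and
         (r+s)((r+s)x + t + a) = 0, so (r+s)x = t + a; taking traces gives
         0 = (t+a) tr 1 = t + a, hence x = 0, then t = 0 and a = 0.
   The main theorem (m = k-1 is odd since k is even) collects (i)-(iii). *)

Section Char2Trace.

Variables (F : finFieldType) (m : nat).
Hypothesis char2 : 2%N \in [pchar F].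

Local Notation tr := (@ftr F m).

Lemma expr2nD (i : nat) (x y : F) :
  (x + y) ^+ (2 ^ i) = x ^+ (2 ^ i) + y ^+ (2 ^ i).
Proof.
elim: i => [|i IH]; first by rewrite !expr1.
by rewrite expnSr !exprM IH sqrrD mulrn_pchar // addr0.
Qed.

Lemma ftrD (x y : F) : tr (x + y) = tr x + tr y.
Proof. by rewrite /ftr -big_split; apply: eq_bigr => i _; rewrite expr2nD. Qed.

Lemma ftr0 : tr 0 = 0.
Proof. by rewrite /ftr big1 // => i _; rewrite expr0n expn_eq0. Qed.

Lemma ftr_sqr (x : F) : tr x ^+ 2 = tr (x ^+ 2).
Proof.
rewrite /ftr; elim/big_rec2: _ => [|i a b _ <-]; first by rewrite expr0n.
rewrite sqrrD mulrn_pchar // addr0 -!exprM.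
by congr (_ + _); rewrite mulnC -expnS.
Qed.

Lemma inF2P (a : F) : inF2 a -> a = 0 \/ a = 1.
Proof.
move=> /eqP aa; have : a * (a - 1) == 0 by rewrite mulrBr mulr1 -expr2 aa subrr.
by rewrite mulf_eq0 subr_eq0 => /orP[] /eqP; [left | right].
Qed.

Lemma inF2D (a b : F) : inF2 a -> inF2 b -> inF2 (a + b).
Proof.
by rewrite /inF2 => /eqP aa /eqP bb; rewrite sqrrD mulrn_pchar // addr0 aa bb.
Qed.

Lemma ftrZ (c x : F) : inF2 c -> tr (c * x) = c * tr x.
Proof. by case/inF2P => ->; rewrite ?mul1r // !mul0r ftr0. Qed.

Hypothesis cardF : #|F| = (2 ^ m)%N.

(* The trace is invariant under Frobenius: the conjugates x^(2^i) are merely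
   permuted, since x^(2^m) = x. *)
Lemma ftr_sqr_arg (x : F) : tr (x ^+ 2) = tr x.
Proof.
case: m cardF => [|n] cardFn; first by rewrite /ftr !big_ord0.
rewrite /ftr big_ord_recr big_ord_recl /= -exprM -expnS -cardFn expf_card.
rewrite expr1 addrC; congr (_ + _).
by apply: eq_bigr => i _; rewrite -exprM -expnS.
Qed.

Lemma ftr_inF2 (x : F) : inF2 (tr x).
Proof. by rewrite /inF2 ftr_sqr ftr_sqr_arg. Qed.

Hypothesis m_odd : odd m.

(* tr 1 = m mod 2 = 1 for odd m. *)
Lemma ftr1 : tr 1 = 1.
Proof.
rewrite /ftr (eq_bigr (fun _ => 1)) => [|i _]; last by rewrite expr1n.
rewrite sumr_const card_ord -[m]odd_double_half m_odd -mul2n mulrnDr.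
by rewrite mulrnA (pcharf0 char2) mul0rn addr0.
Qed.

Lemma dotV_Lmap_self (s x a : F) : inF2 a ->
  dotV m (x, a) (Lmap m s (x, a)) = 0.
Proof.
move=> F2a; set t := tr (s * x); rewrite /dotV /Lmap /= -/t.
have -> : x * (s ^+ 2 * x + s * t + a * s) = (s * x) ^+ 2 + t * (s * x) + a * (s * x)
  by ring.
have F2t : inF2 t := ftr_inF2 (s * x).
rewrite !ftrD ftr_sqr_arg (ftrZ t _ F2t) (ftrZ a _ F2a) -/t -expr2.
by move/eqP: F2t => ->; rewrite addrr_pchar2 // add0r addrr_pchar2.
Qed.

Lemma dotV_Lmap_sym (s x y a b : F) : inF2 a -> inF2 b ->
  dotV m (x, a) (Lmap m s (y, b)) = dotV m (Lmap m s (x, a)) (y, b).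
Proof.
move=> F2a F2b; rewrite /dotV /Lmap /=.
have -> : x * (s ^+ 2 * y + s * tr (s * y) + b * s)
          = s ^+ 2 * x * y + tr (s * y) * (s * x) + b * (s * x) by ring.
have -> : (s ^+ 2 * x + s * tr (s * x) + a * s) * y
          = s ^+ 2 * x * y + tr (s * x) * (s * y) + a * (s * y) by ring.
rewrite !ftrD (ftrZ _ _ (ftr_inF2 _)) (ftrZ _ _ (ftr_inF2 _)).
by rewrite (ftrZ b _ F2b) (ftrZ a _ F2a); ring.
Qed.

Lemma Lmap_inj_param (r s x a : F) : inF2 a -> r != s ->
  Lmap m r (x, a) = Lmap m s (x, a) -> (x, a) = (0, 0).
Proof.
move=> F2a neq_rs [eq1 eq_tr]; set t := tr (s * x) in eq1 eq_tr.
rewrite eq_tr in eq1.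
have rs_sub : r - s = r + s by rewrite oppr_pchar2.
have nz_rs : r + s != 0 by rewrite -rs_sub subr_eq0.
have tr_rsx : tr ((r + s) * x) = 0 by rewrite mulrDl ftrD eq_tr addrr_pchar2.
(* Subtracting the first components gives (r-s)((r+s)x + t + a) = 0. *)
have rsx : (r + s) * x = t + a.
  have : (r - s) * ((r + s) * x + (t + a)) = 0.
    have -> : (r - s) * ((r + s) * x + (t + a))
              = (r ^+ 2 * x + r * t + a * r) - (s ^+ 2 * x + s * t + a * s) by ring.
    by rewrite eq1 subrr.
  move/eqP; rewrite rs_sub mulf_eq0 (negbTE nz_rs) /= addr_eq0 => /eqP ->.
  by rewrite oppr_pchar2.
(* Taking traces: t + a lies in F_2, so t + a = (t + a) tr 1 = 0. *)
have ta0 : t + a = 0.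
  by rewrite -[t + a]mulr1 -ftr1 -ftrZ ?inF2D ?ftr_inF2 // mulr1 -rsx.
have x0 : x = 0.
  by move/eqP: rsx; rewrite ta0 mulf_eq0 (negbTE nz_rs) => /eqP.
have t0 : t = 0 by rewrite /t x0 mulr0 ftr0.
by move: ta0; rewrite t0 add0r x0 => ->.
Qed.

End Char2Trace.

Theorem mainTheorem9 (k : nat) (F : finFieldType)
    (hk_even : ~~ odd k) (hk_pos : (0 < k)%N) (hF : #|F| = (2 ^ k.-1)%N) :
  (forall (s x alpha : F), inF2 alpha ->
     dotV k.-1 (x, alpha) (Lmap k.-1 s (x, alpha)) = 0)
  /\ (forall (s x y alpha beta : F), inF2 alpha -> inF2 beta ->
     dotV k.-1 (x, alpha) (Lmap k.-1 s (y, beta))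
       = dotV k.-1 (Lmap k.-1 s (x, alpha)) (y, beta))
  /\ (forall (r s x alpha : F), inF2 alpha -> r != s ->
     Lmap k.-1 r (x, alpha) = Lmap k.-1 s (x, alpha) -> (x, alpha) = (0, 0)).
Proof.
have char2 : 2%N \in [pchar F] := card_finPcharP hF (erefl true).
have m_odd : odd k.-1 by move: hk_even hk_pos; case: (k) => //= n; rewrite negbK.
split; [|split].
- exact: (@dotV_Lmap_self F _ char2 hF).
- exact: (@dotV_Lmap_sym F _ char2 hF).
- exact: (@Lmap_inj_param F _ char2 hF m_odd).
Qed.
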